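(* Assume the standing setting and Condition 1, and fix $s\in(t_0,T)$. Let $\mathcal P=\mathrm{span}\{P_i:i=1,\dots,m\}$ and $\mathcal R=\mathrm{span}\{R_{1,j}(\cdot,s):j=1,\dots,m\}$. Then $\mathcal P$ and $\mathcal R$ are orthogonal with respect to the inner product $\langle f,g\rangle_K=\int_{t_0}^T\mathcal L[f](t)\,\mathcal L[g](t)\,dt$ associated with $K$.
   Context: Standing setting. Fix an integer $m\ge1$ and $-\infty\le t_0<T\le\infty$. $y$ is a zero-mean Gaussian process on $[t_0,T]$ with positive definite covariance $K(t,t')=\mathbb E[y(t)y(t')]$, solving $\mathcal L[y](t):=y^{(m)}(t)+c_{m-1}(t)y^{(m-1)}(t)+\cdots+c_0(t)y(t)=W(t)$, $W$ white noise with $\mathbb E[W(t)W(t')]=\delta(t-t')$. Condition 1: $\mathcal L h=0$ has $m$ linearly independent bounded solutions on $(t_0,T)$. Under Condition 1 there are functions $u_1,\dots,u_{m+1}$ with $0<|u_i|<\infty$ such that $\mathcal L[y]=\frac1{u_{m+1}}\partial_t\tilde D_m\cdots\tilde D_2\frac{y}{u_1}$, $\tilde D_i:=\frac1{u_i}\partial_t$. The state vector is $z=(z_1,\dots,z_m)^T$, $z_1=y$, $z_i=\tilde D_iz_{i-1}$, and $R_{1,j}(t,s)=\mathbb E[y(t)z_j(s)]$. $P_1,\dots,P_m$ are functions with $\tilde D_{i+1}\cdots\tilde D_2P_i=0$ and $\tilde D_i\cdots\tilde D_2P_i=1$. *)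

From HB Require Import structures.
From mathcomp Require Import all_boot all_order all_algebra.
From mathcomp Require Import all_classical all_reals all_analysis.
Set Implicit Arguments. Unset Strict Implicit. Unset Printing Implicit Defensive.
Import Order.TTheory GRing.Theory Num.Theory.
Import numFieldNormedType.Exports.
Local Open Scope classical_set_scope.
Local Open Scope ring_scope.

Section Defs.
Context {R : realType}.

Definition Iv (t0 T : \bar R) : set R := [set t | (t0 < t%:E < T)%E].

(* \tilde D_i f = (1/u_i) d/dt f ;  u is indexed by 1..m+1 *)
Definition Dt (u : nat -> R -> R) (i : nat) (f : R -> R) : R -> R :=
  fun t => (u i t)^-1 * (derive1 f t).

(* chain u f k = \tilde D_k ... \tilde D_2 f   (chain u f 1 = f) *)
Fixpoint chain (u : nat -> R -> R) (f : R -> R) (k : nat) : R -> R :=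
  match k with
  | 0 => f
  | k'.+1 => match k' with
             | 0 => f
             | _ => Dt u k (chain u f k')
             end
  end.

Definition divu1 (u : nat -> R -> R) (f : R -> R) : R -> R :=
  fun t => f t / u 1%N t.

Definition Lfac (u : nat -> R -> R) (m : nat) (f : R -> R) : R -> R :=
  fun t => (u m.+1 t)^-1 * (derive1 (chain u (divu1 u f) m) t).

Definition Lcoef (c : nat -> R -> R) (m : nat) (f : R -> R) : R -> R :=
  fun t => derive1n m f t + \sum_(k < m) c k t * derive1n k f t.

Definition innerK (t0 T : \bar R) (L : (R -> R) -> R -> R) (f g : R -> R) : \bar R :=
  (\int[lebesgue_measure]_(t in Iv t0 T) (L f t * L g t)%:E)%E.

Definition spanF (m : nat) (F : nat -> R -> R) : set (R -> R) :=
  [set g | exists a : nat -> R, g = fun t => \sum_(1 <= i < m.+1) a i * F i t].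

Definition condition1 (c : nat -> R -> R) (m : nat) (t0 T : \bar R) : Prop :=
  exists h : 'I_m -> R -> R,
    [/\ (forall i k t, (k < m)%N -> Iv t0 T t -> derivable (derive1n k (h i)) t 1),
        (forall i t, Iv t0 T t -> Lcoef c m (h i) t = 0),
        (forall i, exists M : R, forall t, Iv t0 T t -> `|h i t| <= M) &
        (forall a : 'I_m -> R, (forall t, Iv t0 T t -> \sum_i a i * h i t = 0) ->
            forall i, a i = 0)].

Section Prob.
Context {d : measure_display} {Om : measurableType d} (P : probability Om R).

(* X is a (possibly degenerate) Gaussian random variable *)
Definition gaussian_rv (X : Om -> R) : Prop :=
  (exists mu sigma : R, 0 < sigma /\
     forall A : set R, measurable A -> P (X @^-1` A) = normal_prob mu sigma A)
  \/ (exists mu : R, forall A : set R, measurable A -> P (X @^-1` A) = \d_mu A).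

Definition gaussian_process (D : set R) (y : R -> Om -> R) (K : R -> R -> R) : Prop :=
  [/\ (forall t, D t -> measurable_fun setT (y t)),
      (forall n (ts : 'I_n -> R) (a : 'I_n -> R), (forall i, D (ts i)) ->
          gaussian_rv (fun w => \sum_i a i * y (ts i) w)),
      (forall t, D t -> ('E_P[y t] = 0)%E) &
      (forall t t', D t -> D t' -> ('E_P[fun w => (y t w * y t' w)%R] = (K t t')%:E)%E)].

(* mean-square version of  z_i = \tilde D_i z_{i-1}, i.e. z_{i-1}' = u_i z_i in L^2(P) *)
Definition ms_Dt (u : nat -> R -> R) (i : nat) (zprev zi : R -> Om -> R) (D : set R) : Prop :=
  forall s, D s ->
    (fun h => ('E_P[fun w => (((zprev (s + h) w - zprev s w) / h - u i s * zi s w) ^+ 2)%R])%E)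
      @ 0^' --> 0%E.

Definition R1 (y : R -> Om -> R) (z : nat -> R -> Om -> R) (j : nat) (s : R) : R -> R :=
  fun t => fine ('E_P[fun w => (y t w * z j s w)%R])%E.

End Prob.

Definition posdef_kernel (D : set R) (K : R -> R -> R) : Prop :=
  forall n (ts : 'I_n -> R) (a : 'I_n -> R), (forall i, D (ts i)) -> injective ts ->
    (exists i, a i != 0) -> 0 < \sum_i \sum_j a i * a j * K (ts i) (ts j).

End Defs.

From HB Require Import structures.
From mathcomp Require Import all_boot all_order all_algebra.
From mathcomp Require Import all_classical all_reals all_analysis.
Import Order.TTheory GRing.Theory Num.Theory.
Import numFieldNormedType.Exports.
Local Open Scope classical_set_scope.
Local Open Scope ring_scope.

(* Since D~_{i+1} ... D~_2 (P_i/u_1) = 0 and D~_i ... D~_2 (P_i/u_1) = 1, the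
   function D~_m ... D~_2 (P_i/u_1) is constant on (t0, T), so L[P_i] = 0
   there.  By linearity L vanishes on the whole span of the P_i, hence the
   integrand L[f] L[g] of <f, g>_K is identically zero, whatever g is. *)

Section LocalDerivatives.
Context {R : realType} {D : set R}.
Hypothesis openD : open D.

Lemma derive1_eq_on {f g : R -> R} {t : R} :
  (forall x, D x -> f x = g x) -> D t -> derive1 f t = derive1 g t.
Proof.
move=> fg tD; rewrite !derive1E; apply: near_eq_derive.
exact: filterS fg (open_nbhs_nbhs (conj openD tD)).
Qed.

Lemma derive1_const_on {f : R -> R} {k t : R} :
  (forall x, D x -> f x = k) -> D t -> derive1 f t = 0.
Proof. by move=> fk tD; rewrite (derive1_eq_on fk tD) derive1_cst. Qed.

End LocalDerivatives.

Lemma derive1_lincomb {R : realType} (I : eqType) (r : seq I) (a : I -> R)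
    (F : I -> R -> R) t :
  {in r, forall i, derivable (F i) t 1} ->
  derive1 (fun x => \sum_(i <- r) a i * F i x) t = \sum_(i <- r) a i * derive1 (F i) t.
Proof.
move=> dF; rewrite derive1E; apply: derive_val.
elim: r dF => [|i r IH] dF.
  under eq_fun do rewrite big_nil.
  by rewrite big_nil; exact: is_derive_cst.
have -> : (fun x => \sum_(j <- i :: r) a j * F j x) =
    (fun x => a i * F i x) + (fun x => \sum_(j <- r) a j * F j x).
  by apply: funext => x; rewrite big_cons.
rewrite big_cons; apply: is_deriveD; last first.
  by apply: IH => j jr; apply: dF; rewrite inE jr orbT.
have dFi := dF i (mem_head i r).
rewrite -derive1Ml // derive1E; apply: derivableP.
exact: derivableM (derivable_cst _ _ _) dFi.
Qed.

Section Chain.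
Context {R : realType} {D : set R}.
Hypothesis openD : open D.
Variable u : nat -> R -> R.

Lemma chainS (f : R -> R) k : (0 < k)%N -> chain u f k.+1 = Dt u k.+1 (chain u f k).
Proof. by case: k. Qed.

Lemma chain_lincomb (I : eqType) (r : seq I) (a : I -> R) (F : I -> R -> R) k :
  (forall i j t, i \in r -> (0 < j < k)%N -> D t -> derivable (chain u (F i) j) t 1) ->
  forall t, D t ->
  chain u (fun x => \sum_(i <- r) a i * F i x) k t = \sum_(i <- r) a i * chain u (F i) k t.
Proof.
elim: k => [|k IH] dF t tD //; case: (posnP k) => [-> //|k_gt0].
rewrite chainS // /Dt (derive1_eq_on openD (IH _) tD); last first.
  by move=> i j x ir /andP[j0 jk]; apply: dF; rewrite // j0 ltnS ltnW.
rewrite derive1_lincomb; last by move=> i ir; apply: dF; rewrite ?k_gt0 ?ltnSn.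
rewrite mulr_sumr; apply: eq_bigr => i _.
by rewrite chainS // /Dt mulrCA.
Qed.

Lemma chain_eq0_above {f : R -> R} {i k : nat} : (i < k)%N ->
  (forall t, D t -> chain u f i.+1 t = 0) -> forall t, D t -> chain u f k t = 0.
Proof.
elim: k => [//|k IH]; rewrite ltnS leq_eqVlt => /predU1P[<- //|ik] f0 t tD.
rewrite chainS /Dt ?(derive1_const_on openD (IH ik f0)) ?mulr0 //.
exact: leq_ltn_trans ik.
Qed.

Lemma derive1_chain_eq0 {f : R -> R} {i m : nat} {t : R} : (i <= m)%N ->
  (forall t, D t -> chain u f i.+1 t = 0) -> (forall t, D t -> chain u f i t = 1) ->
  D t -> derive1 (chain u f m) t = 0.
Proof.
rewrite leq_eqVlt => /predU1P[<- _ f1 tD|im f0 _ tD].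
  exact: (derive1_const_on openD f1 tD).
exact: (derive1_const_on openD (chain_eq0_above im f0) tD).
Qed.

End Chain.

Section FactorizedOperator.
Context {R : realType} {D : set R}.
Hypothesis openD : open D.
Variables (u : nat -> R -> R) (m : nat).

Lemma divu1_lincomb (I : Type) (r : seq I) (a : I -> R) (F : I -> R -> R) :
  divu1 u (fun x => \sum_(i <- r) a i * F i x) =
  (fun x => \sum_(i <- r) a i * divu1 u (F i) x).
Proof.
by apply: funext => x; rewrite /divu1 mulr_suml; apply: eq_bigr => i _; rewrite mulrA.
Qed.

Lemma Lfac_lincomb (I : eqType) (r : seq I) (a : I -> R) (F : I -> R -> R) :
  (0 < m)%N ->
  (forall i j t, i \in r -> (0 < j <= m)%N -> D t ->
     derivable (chain u (divu1 u (F i)) j) t 1) ->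
  forall t, D t ->
  Lfac u m (fun x => \sum_(i <- r) a i * F i x) t = \sum_(i <- r) a i * Lfac u m (F i) t.
Proof.
move=> m_gt0 dF t tD; rewrite /Lfac divu1_lincomb.
pose G x := \sum_(i <- r) a i * chain u (divu1 u (F i)) m x.
rewrite (derive1_eq_on openD (g := G) _ tD); last first.
  apply: (chain_lincomb openD) => i j x ir /andP[j0 jm].
  by apply: dF; rewrite // j0 ltnW.
rewrite derive1_lincomb; last by move=> i ir; apply: dF; rewrite ?m_gt0 ?leqnn.
by rewrite mulr_sumr; apply: eq_bigr => i _; rewrite mulrCA.
Qed.

Lemma Lfac_eq0 {f : R -> R} {i : nat} {t : R} : (i <= m)%N ->
  (forall t, D t -> chain u (divu1 u f) i.+1 t = 0) ->
  (forall t, D t -> chain u (divu1 u f) i t = 1) ->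
  D t -> Lfac u m f t = 0.
Proof. by move=> im f0 f1 tD; rewrite /Lfac (derive1_chain_eq0 openD u im f0 f1 tD) mulr0. Qed.

End FactorizedOperator.

Lemma open_Iv {R : realType} (t0 T : \bar R) : open (Iv t0 T).
Proof.
have -> : Iv t0 T = EFin @^-1` `]t0, T[.
  by apply/seteqP; split => t /=; rewrite in_itv.
apply: open_comp; last exact: itv_open.
by move=> t _; apply: cvg_EFin; [exact: nearW | exact: cvg_id].
Qed.

Theorem lemma2 (R : realType) (m : nat) (t0 T : \bar R)
    (d : measure_display) (Om : measurableType d) (P : probability Om R)
    (c : nat -> R -> R) (u : nat -> R -> R) (K : R -> R -> R)
    (y : R -> Om -> R) (z : nat -> R -> Om -> R) (Pf : nat -> R -> R) (s : R) :
  (1 <= m)%N ->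
  (t0 < T)%E ->
  (* standing setting: y zero-mean Gaussian with positive definite covariance K *)
  gaussian_process P (Iv t0 T) y K ->
  posdef_kernel (Iv t0 T) K ->
  (* Condition 1 *)
  condition1 c m t0 T ->
  (* the functions u_1, ..., u_{m+1}: nonzero and finite, giving the factorization of L *)
  (forall i t, (1 <= i <= m.+1)%N -> Iv t0 T t -> u i t != 0) ->
  (forall f : R -> R,
     (forall k t, (k < m)%N -> Iv t0 T t -> derivable (derive1n k f) t 1) ->
     forall t, Iv t0 T t -> Lcoef c m f t = Lfac u m f t) ->
  (* state vector: z_1 = y, z_i = \tilde D_i z_{i-1} (mean-square derivatives) *)
  z 1%N = y ->
  (forall t, Iv t0 T t -> forall i, (1 <= i <= m)%N -> measurable_fun setT (z i t)) ->
  (forall i, (2 <= i <= m)%N -> ms_Dt P u i (z i.-1) (z i) (Iv t0 T)) ->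
  (* the functions P_1, ..., P_m *)
  (forall i k t, (1 <= i <= m)%N -> (1 <= k <= m)%N -> Iv t0 T t ->
     derivable (chain u (divu1 u (Pf i)) k) t 1) ->
  (forall i t, (1 <= i <= m)%N -> Iv t0 T t -> chain u (divu1 u (Pf i)) i.+1 t = 0) ->
  (forall i t, (1 <= i <= m)%N -> Iv t0 T t -> chain u (divu1 u (Pf i)) i t = 1) ->
  Iv t0 T s ->
  forall f g, spanF m Pf f -> spanF m (fun j => R1 P y z j s) g ->
    innerK t0 T (Lfac u m) f g = 0%E.
Proof.
move=> m_gt0 _ _ _ _ _ _ _ _ _ dP P0 P1 _ f g [a ->] _.
have LP0 t : Iv t0 T t -> Lfac u m (fun x => \sum_(1 <= i < m.+1) a i * Pf i x) t = 0.
  move=> tD; rewrite (Lfac_lincomb (open_Iv t0 T)) //; last first.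
    by move=> i j x; rewrite mem_index_iota => *; apply: dP.
  rewrite big_seq big1 // => i; rewrite mem_index_iota ltnS => im.
  have /andP[_ leim] := im.
  by rewrite (Lfac_eq0 (open_Iv t0 T) u m leim (P0 i ^~ im) (P1 i ^~ im) tD) mulr0.
by apply: integral0_eq => t /LP0 ->; rewrite mul0r.
Qed.
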